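(* Let $X$ be a set and let $\mathcal F:X^4\to\mathbb R$ satisfy, for all $x_1,x_2,x_3,x_4,w\in X$: $$\mathcal F(x_1,x_2,x_3,x_4)+\mathcal F(x_2,x_3,x_1,x_4)+\mathcal F(x_3,x_1,x_2,x_4)=0,$$ $$\mathcal F(x_2,x_1,x_3,x_4)=\mathcal F(x_1,x_2,x_4,x_3)=-\mathcal F(x_1,x_2,x_3,x_4),$$ $$\mathcal F(x_1,x_2,x_3,x_4)=\mathcal F(x_1,w,x_3,x_4)+\mathcal F(w,x_2,x_3,x_4).$$ Then there exists a function $g:X^2\to\mathbb R$ such that for all $x_1,x_2,x_3,x_4\in X$ $$\mathcal F(x_1,x_2,x_3,x_4)=g(x_1,x_3)-g(x_1,x_4)-g(x_2,x_3)+g(x_2,x_4).$$ Moreover, for any fixed $a,b\in X$ there is exactly one such $g$ satisfying the normalization $g(a,w)=g(w,b)=0$ for all $w\in X$ (namely $g(u,v)=\mathcal F(u,a,v,b)$). *)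

From Stdlib Require Import Reals.
Open Scope R_scope.

Definition F_cyclic {X : Type} (F : X -> X -> X -> X -> R) : Prop :=
  forall x1 x2 x3 x4,
    F x1 x2 x3 x4 + F x2 x3 x1 x4 + F x3 x1 x2 x4 = 0.

Definition F_antisym {X : Type} (F : X -> X -> X -> X -> R) : Prop :=
  forall x1 x2 x3 x4,
    F x2 x1 x3 x4 = - F x1 x2 x3 x4 /\ F x1 x2 x4 x3 = - F x1 x2 x3 x4.

Definition F_additive {X : Type} (F : X -> X -> X -> X -> R) : Prop :=
  forall x1 x2 x3 x4 w,
    F x1 x2 x3 x4 = F x1 w x3 x4 + F w x2 x3 x4.

Definition represents {X : Type} (F : X -> X -> X -> X -> R) (g : X -> X -> R) : Prop :=
  forall x1 x2 x3 x4,
    F x1 x2 x3 x4 = g x1 x3 - g x1 x4 - g x2 x3 + g x2 x4.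

Definition normalized {X : Type} (a b : X) (g : X -> X -> R) : Prop :=
  forall w, g a w = 0 /\ g w b = 0.

From Stdlib Require Import Reals Lra Classical FunctionalExtensionality.
Open Scope R_scope.

(* The first two identities are those of a Riemann-type curvature tensor, so F
   has the pair symmetry F(a,b,c,d) = F(c,d,a,b).  Hence the additivity in the
   first pair of arguments transfers to the second pair, and telescoping through
   fixed points a, b in both pairs gives F(x1,x2,x3,x4) = g(x1,x3) - g(x1,x4)
   - g(x2,x3) + g(x2,x4) with g(u,v) = F(u,a,v,b).  Conversely a normalized
   representative is pinned down by evaluating the representation at (u,a,v,b). *)

Section CurvatureLikeForm.

Context {X : Type} {F : X -> X -> X -> X -> R}.
Hypotheses (Hcyc : F_cyclic F) (Hanti : F_antisym F) (Hadd : F_additive F).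

Lemma F_swap12 a b c d : F b a c d = - F a b c d.
Proof. exact (proj1 (Hanti a b c d)). Qed.

Lemma F_swap34 a b c d : F a b d c = - F a b c d.
Proof. exact (proj2 (Hanti a b c d)). Qed.

Lemma F_swap12_34 a b c d : F b a d c = F a b c d.
Proof. rewrite F_swap34, F_swap12; ring. Qed.

Lemma F_pair_sym a b c d : F a b c d = F c d a b.
Proof.
  (* Alternating sum of the cyclic identity at the four rotations of (a,b,c,d). *)
  pose proof (Hcyc a b c d); pose proof (Hcyc b c d a).
  pose proof (Hcyc c d a b); pose proof (Hcyc d a b c).
  pose proof (F_swap34 a b c d); pose proof (F_swap34 c d a b).
  pose proof (F_swap34 b c a d); pose proof (F_swap34 d a b c).
  pose proof (F_swap12_34 c a b d); pose proof (F_swap12_34 d b c a).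
  lra.
Qed.

Lemma F_additive34 p q r s w : F p q r s = F p q r w + F p q w s.
Proof. rewrite !(F_pair_sym p q); apply Hadd. Qed.

Lemma represents_F_base a b : represents F (fun u v => F u a v b).
Proof.
  intros x1 x2 x3 x4; cbv beta.
  rewrite (Hadd x1 x2 x3 x4 a), (F_swap12 x2 a).
  rewrite (F_additive34 x1 a x3 x4 b), (F_additive34 x2 a x3 x4 b).
  rewrite (F_swap34 x1 a b x4), (F_swap34 x2 a b x4).
  ring.
Qed.

Lemma normalized_F_base a b : normalized a b (fun u v => F u a v b).
Proof.
  intro w; split.
  - pose proof (F_swap12 a a w b); lra.
  - pose proof (F_swap34 w a b b); lra.
Qed.

End CurvatureLikeForm.

Lemma normalized_representative_eq (X : Type) (F : X -> X -> X -> X -> R)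
  (a b : X) (g : X -> X -> R) :
  normalized a b g -> represents F g -> forall u v, g u v = F u a v b.
Proof.
  intros Hn Hr u v; rewrite (Hr u a v b).
  destruct (Hn v) as [-> _], (Hn u) as [_ ->], (Hn b) as [-> _]; ring.
Qed.

Theorem mainTheorem12 (X : Type) (F : X -> X -> X -> X -> R)
  (Hcyc : F_cyclic F) (Hanti : F_antisym F) (Hadd : F_additive F) :
  (exists g : X -> X -> R, represents F g) /\
  (forall a b : X,
     exists! g : X -> X -> R, normalized a b g /\ represents F g) /\
  (forall (a b : X) (g : X -> X -> R),
     normalized a b g -> represents F g ->
     forall u v, g u v = F u a v b).
Proof.
  split; [| split; [| exact (normalized_representative_eq X F)]].
  - destruct (classic (inhabited X)) as [[a] | Hempty].
    + exists (fun u v => F u a v a); exact (represents_F_base Hcyc Hanti Hadd a a).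
    + exists (fun _ _ => 0); intros x1; exfalso; exact (Hempty (inhabits x1)).
  - intros a b; exists (fun u v => F u a v b); split.
    + split; [exact (normalized_F_base Hanti a b) |
              exact (represents_F_base Hcyc Hanti Hadd a b)].
    + intros g [Hn Hr].
      extensionality u; extensionality v.
      symmetry; exact (normalized_representative_eq X F a b g Hn Hr u v).
Qed.
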